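(* Let $p\in(0,1)$, $\gamma>0$, $B>0$, $w,N\in\mathbb{N}$, let $(\xi_j^{(N)*})_{j=1}^N$ be the unique maximizer of $\mathcal{T}_N$, and let $B^{(N)}=B-\sum_{i=1}^N\xi_i^{(N)*}$. Then $$\xi_N^{(N)*}=\frac{B^{(N)}}{w},$$ and for every $j\in\{1,\dots,N-1\}$, $$\frac{1-p}{1+\gamma\xi_{j+1}^{(N)*}}=\frac{1}{1+\gamma\xi_j^{(N)*}}-\frac{p}{1+\frac{\gamma}{w}\left(B-\sum_{i=1}^{j}\xi_i^{(N)*}\right)}.$$
   Context: Logarithms are base 2. For an admissible (nonnegative, with sum at most $B$) sequence $(x_j)_{j\ge1}$, $$\mathcal{T}_\infty(x_1,x_2,\dots)=\sum_{k=1}^{w}p^2(1-p)^{k-1}\frac{k}{2}\log_2\!\Big(1+\gamma\frac{B}{k}\Big)+\sum_{j=1}^{\infty}p(1-p)^{j+w-1}\frac12\log_2(1+\gamma x_j)+\sum_{k=1}^{\infty}p^2(1-p)^{k+w-1}\frac{w}{2}\log_2\!\Big(1+\gamma\frac{B-\sum_{j=1}^{k}x_j}{w}\Big).$$ For $N\in\mathbb{N}$ and $\xi_1,\dots,\xi_N\ge0$ with $\sum_{j=1}^N\xi_j\le B$, define $\mathcal{T}_N(\xi_1,\dots,\xi_N)=\mathcal{T}_\infty(\xi_1,\dots,\xi_N,0,0,\dots)$. $\mathcal{T}_N$ has a unique maximizer over this compact set, denoted $(\xi_j^{(N)*})_{j=1}^N$. *)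

From Stdlib Require Import Reals Lra.
From Coquelicot Require Import Coquelicot.
Open Scope R_scope.

Definition log2 (x : R) : R := ln x / ln 2.

Fixpoint sum1 (f : nat -> R) (n : nat) : R :=
  match n with
  | O => 0
  | S m => sum1 f m + f (S m)
  end.

(* Sequences are indexed from 1: x : nat -> R, the value x 0 is ignored. *)
Definition Tinf (p gamma B : R) (w : nat) (x : nat -> R) : R :=
  sum1 (fun k => p ^ 2 * (1 - p) ^ (k - 1) * (INR k / 2)
                 * log2 (1 + gamma * (B / INR k))) w
  + Series (fun n => (* j = n + 1 *)
      p * (1 - p) ^ (n + w) * (1 / 2) * log2 (1 + gamma * x (S n)))
  + Series (fun n => (* k = n + 1 *)
      p ^ 2 * (1 - p) ^ (n + w) * (INR w / 2)
      * log2 (1 + gamma * ((B - sum1 x (S n)) / INR w))).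

Definition padN (N : nat) (xi : nat -> R) : nat -> R :=
  fun j => if (j <=? N)%nat then xi j else 0.

Definition TN (p gamma B : R) (w N : nat) (xi : nat -> R) : R :=
  Tinf p gamma B w (padN N xi).

Definition feasibleN (B : R) (N : nat) (xi : nat -> R) : Prop :=
  (forall j : nat, (1 <= j <= N)%nat -> 0 <= xi j) /\ sum1 xi N <= B.

Definition is_maximizerN (p gamma B : R) (w N : nat) (xi : nat -> R) : Prop :=
  feasibleN B N xi /\
  forall eta : nat -> R, feasibleN B N eta ->
    TN p gamma B w N eta <= TN p gamma B w N xi.

From Stdlib Require Import Reals Lra Lia.
From Coquelicot Require Import Coquelicot.
Open Scope R_scope.

(* Both series in [T_N] are geometric beyond index [N], so [T_N] is a finite sum
   of terms [log2 (1 + c y)] in the coordinates [xi_j] and in the slacks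
   [B - sum_(i<=j) xi_i].  Moving mass between the final slack and [xi_N], or from
   [xi_(j+1)] to [xi_j], stays admissible, so at the maximizer the one-sided
   derivatives along these lines give Karush-Kuhn-Tucker inequalities between
   the quantities [1 / (1 + c y)].  A backward induction on [j] shows with them
   that the final slack and every [xi_j] are positive; then each line can be
   followed in both directions and the inequalities become the two identities. *)

Lemma sum1_ext (f g : nat -> R) (n : nat) :
  (forall i, (1 <= i <= n)%nat -> f i = g i) -> sum1 f n = sum1 g n.
Proof.
  induction n as [|n IH]; intros Hfg; simpl; [reflexivity|].
  rewrite IH; [rewrite Hfg by lia; reflexivity|]. intros i Hi; apply Hfg; lia.
Qed.

Lemma sum_n_sum1 (u f : nat -> R) (m : nat) :
  (forall n, (n <= m)%nat -> u n = f (S n)) -> sum_n u m = sum1 f (S m).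
Proof.
  induction m as [|m IH]; intros Huf.
  - rewrite sum_O, Huf by lia. simpl. ring.
  - rewrite sum_Sn, IH; [rewrite Huf by lia; reflexivity|]. intros n Hn; apply Huf; lia.
Qed.

Lemma sum1_le (x : nat -> R) (k n : nat) :
  (forall i, (1 <= i <= n)%nat -> 0 <= x i) -> (k <= n)%nat -> sum1 x k <= sum1 x n.
Proof.
  induction n as [|n IH]; intros Hx Hk.
  - replace k with 0%nat by lia. lra.
  - destruct (Nat.eq_dec k (S n)) as [->|Hne]; [lra|].
    simpl. assert (sum1 x k <= sum1 x n) by (apply IH; [intros i Hi; apply Hx|]; lia).
    assert (0 <= x (S n)) by (apply Hx; lia). lra.
Qed.

Lemma sum1_padN (N : nat) (x : nat -> R) (k : nat) :
  sum1 (padN N x) k = sum1 x (Nat.min k N).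
Proof.
  induction k as [|k IH]; [reflexivity|].
  change (sum1 (padN N x) k + padN N x (S k) = sum1 x (Nat.min (S k) N)).
  rewrite IH. unfold padN. destruct (Nat.leb_spec (S k) N).
  - rewrite (Nat.min_l k), (Nat.min_l (S k)) by lia. reflexivity.
  - rewrite (Nat.min_r k), (Nat.min_r (S k)) by lia. ring.
Qed.

Lemma sum1_update (f g : nat -> R) (j n : nat) :
  (forall i, (1 <= i <= n)%nat -> i <> j -> f i = g i) -> (1 <= j <= n)%nat ->
  sum1 f n = sum1 g n + (f j - g j).
Proof.
  induction n as [|n IH]; intros Hfg Hj; [lia|].
  simpl. destruct (Nat.eq_dec j (S n)) as [->|Hne].
  - rewrite (sum1_ext f g n); [ring|]. intros i Hi; apply Hfg; lia.
  - rewrite IH; [rewrite (Hfg (S n)) by lia; ring| |lia]. intros i Hi; apply Hfg; lia.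
Qed.

Lemma sum1_update2 (f g : nat -> R) (j n : nat) :
  (forall i, (1 <= i <= n)%nat -> i <> j -> i <> S j -> f i = g i) -> (1 <= j < n)%nat ->
  sum1 f n = sum1 g n + (f j - g j) + (f (S j) - g (S j)).
Proof.
  induction n as [|n IH]; intros Hfg Hj; [lia|].
  simpl. destruct (Nat.eq_dec n j) as [->|Hne].
  - rewrite (sum1_update f g j j); [ring| |lia]. intros i Hi Hij; apply Hfg; lia.
  - rewrite IH; [rewrite (Hfg (S n)) by lia; ring| |lia]. intros i Hi; apply Hfg; lia.
Qed.

Lemma is_series_geom_tail (u : nat -> R) (m : nat) (C q : R) : 0 <= q < 1 ->
  (forall n, (m < n)%nat -> u n = C * q ^ n) ->
  is_series u (sum_n u m + C * q ^ S m / (1 - q)).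
Proof.
  intros Hq Hu. apply (is_series_decr_n _ (S m)); [lia|]. simpl pred.
  assert (Htail : is_series (fun n => C * q ^ S m * q ^ n) (C * q ^ S m * / (1 - q))).
  { assert (Hgeom : Rabs q < 1) by (rewrite Rabs_right; lra).
    exact (is_series_scal_l (C * q ^ S m) _ _ (is_series_geom q Hgeom)). }
  eapply is_series_ext in Htail.
  - replace (plus _ _) with (C * q ^ S m * / (1 - q)); [exact Htail|].
    change (C * q ^ S m * / (1 - q)
            = sum_n u m + C * q ^ S m / (1 - q) + - sum_n u m).
    field. lra.
  - intros n. cbv beta. rewrite Hu by lia. rewrite pow_add. apply Rmult_assoc.
Qed.

Definition alpha (p : R) (w j : nat) : R := p * (1 - p) ^ (j - 1 + w) / 2.

Lemma alpha_S (p : R) (w j : nat) : (1 <= j)%nat -> alpha p w (S j) = (1 - p) * alpha p w j.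
Proof.
  intros Hj. unfold alpha. replace (S j - 1 + w)%nat with (S (j - 1 + w)) by lia.
  simpl. field.
Qed.

Lemma alpha_pos (p : R) (w j : nat) : 0 < p < 1 -> 0 < alpha p w j.
Proof. intros Hp. unfold alpha. assert (0 < (1 - p) ^ (j - 1 + w)) by (apply pow_lt; lra). nra. Qed.

(* The last term is the geometric tail of the second series of [Tinf]: beyond
   index [N] the partial sums of the padded sequence stay at [sum1 eta N]. *)
Definition TN_closed (p gamma B : R) (w N : nat) (eta : nat -> R) : R :=
  sum1 (fun k => p ^ 2 * (1 - p) ^ (k - 1) * (INR k / 2)
                 * log2 (1 + gamma * (B / INR k))) w
  + sum1 (fun j => alpha p w j * log2 (1 + gamma * eta j)) N
  + sum1 (fun j => INR w * p * alpha p w j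
                   * log2 (1 + gamma * ((B - sum1 eta j) / INR w))) N
  + INR w * (1 - p) * alpha p w N * log2 (1 + gamma * ((B - sum1 eta N) / INR w)).

Lemma TN_closedE (p gamma B : R) (w N : nat) (eta : nat -> R) :
  0 < p < 1 -> (1 <= N)%nat -> TN p gamma B w N eta = TN_closed p gamma B w N eta.
Proof.
  intros Hp HN. destruct N as [|N]; [lia|]. unfold TN, Tinf, TN_closed.
  set (u1 := fun n => p * (1 - p) ^ (n + w) * (1 / 2)
                      * log2 (1 + gamma * padN (S N) eta (S n))).
  set (u2 := fun n => p ^ 2 * (1 - p) ^ (n + w) * (INR w / 2)
                      * log2 (1 + gamma * ((B - sum1 (padN (S N) eta) (S n)) / INR w))).
  set (LN := log2 (1 + gamma * ((B - sum1 eta (S N)) / INR w))).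
  assert (Hq : 0 <= 1 - p < 1) by lra.
  assert (Htail1 : forall n, (N < n)%nat -> u1 n = 0 * (1 - p) ^ n).
  { intros n Hn. unfold u1, padN. replace (S n <=? S N)%nat with false
      by (symmetry; apply Nat.leb_gt; lia).
    rewrite Rmult_0_r, Rplus_0_r. unfold log2. rewrite ln_1. unfold Rdiv. ring. }
  assert (Htail2 : forall n, (N < n)%nat ->
                     u2 n = p ^ 2 * (1 - p) ^ w * (INR w / 2) * LN * (1 - p) ^ n).
  { intros n Hn. unfold u2. rewrite sum1_padN, Nat.min_r by lia.
    rewrite pow_add. unfold LN. ring. }
  assert (Hsum1 : sum_n u1 N = sum1 (fun j => alpha p w j * log2 (1 + gamma * eta j)) (S N)).
  { apply sum_n_sum1. intros n Hn.
    unfold u1, padN, alpha. replace (S n <=? S N)%nat with true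
      by (symmetry; apply Nat.leb_le; lia).
    replace (S n - 1 + w)%nat with (n + w)%nat by lia. field. }
  assert (Hsum2 : sum_n u2 N = sum1 (fun j => INR w * p * alpha p w j
                    * log2 (1 + gamma * ((B - sum1 eta j) / INR w))) (S N)).
  { apply sum_n_sum1. intros n Hn.
    unfold u2, alpha. rewrite sum1_padN, Nat.min_l by lia.
    replace (S n - 1 + w)%nat with (n + w)%nat by lia. field. }
  rewrite (is_series_unique _ _ (is_series_geom_tail _ N _ _ Hq Htail1)).
  rewrite (is_series_unique _ _ (is_series_geom_tail _ N _ _ Hq Htail2)).
  rewrite Hsum1, Hsum2. unfold alpha, LN.
  replace (S N - 1 + w)%nat with (N + w)%nat by lia.
  rewrite pow_add. simpl. field. lra.
Qed.

Definition bump (x : nat -> R) (m : nat) (t : R) : nat -> R :=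
  fun i => if Nat.eqb i m then x i + t else x i.

Lemma bump_eq (x : nat -> R) (m : nat) (t : R) : bump x m t m = x m + t.
Proof. unfold bump. now rewrite Nat.eqb_refl. Qed.

Lemma bump_neq (x : nat -> R) (m i : nat) (t : R) : i <> m -> bump x m t i = x i.
Proof. intros Him. unfold bump. now destruct (Nat.eqb_spec i m). Qed.

Lemma sum1_bump (x : nat -> R) (m k : nat) (t : R) : (1 <= m)%nat ->
  sum1 (bump x m t) k = sum1 x k + (if (m <=? k)%nat then t else 0).
Proof.
  intros Hm. induction k as [|k IH].
  - simpl. destruct (Nat.leb_spec m 0); [lia|ring].
  - simpl sum1. rewrite IH. unfold bump.
    destruct (Nat.eqb_spec (S k) m), (Nat.leb_spec m k), (Nat.leb_spec m (S k));
      try lia; ring.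
Qed.

Definition transfer (x : nat -> R) (j : nat) (t : R) : nat -> R :=
  bump (bump x j t) (S j) (- t).

Lemma sum1_transfer (x : nat -> R) (j k : nat) (t : R) : (1 <= j)%nat ->
  sum1 (transfer x j t) k = sum1 x k + (if (k =? j)%nat then t else 0).
Proof.
  intros Hj. unfold transfer. rewrite !sum1_bump by lia.
  destruct (Nat.leb_spec j k), (Nat.leb_spec (S j) k), (Nat.eqb_spec k j); try lia; ring.
Qed.

Lemma feasibleN_bump (B : R) (N m : nat) (x : nat -> R) (t : R) :
  feasibleN B N x -> (1 <= m <= N)%nat -> - x m <= t <= B - sum1 x N ->
  feasibleN B N (bump x m t).
Proof.
  intros [Hx Hsum] Hm Ht. split.
  - intros i Hi. destruct (Nat.eq_dec i m) as [->|Him].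
    + rewrite bump_eq. lra.
    + rewrite bump_neq by exact Him. now apply Hx.
  - rewrite sum1_bump by lia. destruct (Nat.leb_spec m N); lra.
Qed.

Lemma feasibleN_transfer (B : R) (N j : nat) (x : nat -> R) (t : R) :
  feasibleN B N x -> (1 <= j < N)%nat -> - x j <= t <= x (S j) ->
  feasibleN B N (transfer x j t).
Proof.
  intros [Hx Hsum] Hj Ht. unfold transfer. split.
  - intros i Hi. destruct (Nat.eq_dec i (S j)) as [->|HiSj].
    + rewrite bump_eq, bump_neq by lia. lra.
    + rewrite bump_neq by exact HiSj. destruct (Nat.eq_dec i j) as [->|Hij].
      * rewrite bump_eq. lra.
      * rewrite bump_neq by exact Hij. now apply Hx.
  - rewrite !sum1_bump by lia.
    destruct (Nat.leb_spec j N), (Nat.leb_spec (S j) N); lia || lra.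
Qed.

Section ObjectiveAlongLines.
Variables (p gamma B : R) (w : nat) (eta : nat -> R).

Definition phi_last (N : nat) (t : R) : R :=
  alpha p w N * log2 (1 + gamma * (eta N + t))
  + INR w * alpha p w N * log2 (1 + gamma * ((B - (sum1 eta N + t)) / INR w)).

Definition phi_transfer (j : nat) (t : R) : R :=
  alpha p w j * log2 (1 + gamma * (eta j + t))
  + alpha p w (S j) * log2 (1 + gamma * (eta (S j) + - t))
  + INR w * p * alpha p w j * log2 (1 + gamma * ((B - (sum1 eta j + t)) / INR w)).

Lemma TN_closed_bump_last (N : nat) (t : R) : (1 <= N)%nat ->
  TN_closed p gamma B w N (bump eta N t) - TN_closed p gamma B w N eta
  = phi_last N t - phi_last N 0.
Proof.
  intros HN. unfold TN_closed, phi_last.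
  rewrite (sum1_update _ (fun j => alpha p w j * log2 (1 + gamma * eta j)) N N);
    [|intros i Hi HiN; now rewrite bump_neq | lia].
  rewrite (sum1_update
             (fun j => _ * log2 (1 + gamma * ((B - sum1 (bump eta N t) j) / INR w)))
             (fun j => INR w * p * alpha p w j
                       * log2 (1 + gamma * ((B - sum1 eta j) / INR w))) N N);
    [|intros i Hi HiN; cbv beta; rewrite sum1_bump by lia;
      destruct (Nat.leb_spec N i); [lia|now rewrite Rplus_0_r] | lia].
  rewrite sum1_bump, Nat.leb_refl, bump_eq, !Rplus_0_r by lia. ring.
Qed.

Lemma TN_closed_transfer (N j : nat) (t : R) : (1 <= j < N)%nat ->
  TN_closed p gamma B w N (transfer eta j t) - TN_closed p gamma B w N eta
  = phi_transfer j t - phi_transfer j 0.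
Proof.
  intros Hj. unfold TN_closed, phi_transfer.
  rewrite (sum1_update2 _ (fun i => alpha p w i * log2 (1 + gamma * eta i)) j N);
    [|intros i Hi Hij HiSj; unfold transfer; now rewrite !bump_neq | lia].
  rewrite (sum1_update
             (fun i => _ * log2 (1 + gamma * ((B - sum1 (transfer eta j t) i) / INR w)))
             (fun i => INR w * p * alpha p w i
                       * log2 (1 + gamma * ((B - sum1 eta i) / INR w))) j N);
    [|intros i Hi Hij; cbv beta; rewrite sum1_transfer by lia;
      destruct (Nat.eqb_spec i j); [lia|now rewrite Rplus_0_r] | lia].
  rewrite !sum1_transfer, Nat.eqb_refl by lia.
  destruct (Nat.eqb_spec N j); [lia|].
  unfold transfer. rewrite bump_eq, bump_neq, bump_eq, bump_neq by lia.
  rewrite Ropp_0, !Rplus_0_r. ring.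
Qed.

End ObjectiveAlongLines.

Lemma deriv_nonpos_right_max (f : R -> R) (x l d : R) :
  derivable_pt_lim f x l -> 0 < d -> (forall t, x < t < x + d -> f t <= f x) -> l <= 0.
Proof.
  intros Hf Hd Hmax. apply Rnot_lt_le. intros Hl.
  destruct (Hf (l / 2) ltac:(lra)) as [[delta Hdelta] Hquot]. simpl in Hquot.
  set (h := Rmin (delta / 2) (d / 2)).
  assert (Hh : 0 < h) by (apply Rmin_pos; lra).
  assert (Hhdelta : h < delta) by (pose proof (Rmin_l (delta / 2) (d / 2)); unfold h; lra).
  assert (Hhd : h < d) by (pose proof (Rmin_r (delta / 2) (d / 2)); unfold h; lra).
  specialize (Hquot h ltac:(lra) ltac:(rewrite Rabs_right; lra)).
  apply Rabs_def2 in Hquot.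
  assert (Hdrop : (f (x + h) - f x) / h <= 0).
  { assert (0 < / h) by (apply Rinv_0_lt_compat; exact Hh).
    specialize (Hmax (x + h) ltac:(lra)). unfold Rdiv. nra. }
  lra.
Qed.

Lemma deriv_nonneg_left_max (f : R -> R) (x l d : R) :
  derivable_pt_lim f x l -> 0 < d -> (forall t, x - d < t < x -> f t <= f x) -> 0 <= l.
Proof.
  intros Hf Hd Hmax.
  assert (Hmirr : derivable_pt_lim (mirr_fct f) (- x) (- l)).
  { apply derivable_pt_lim_mirr_fwd. now rewrite !Ropp_involutive. }
  enough (- l <= 0) by lra.
  apply (deriv_nonpos_right_max _ _ _ d Hmirr Hd).
  intros t Ht. unfold mirr_fct. rewrite Ropp_involutive. apply Hmax. lra.
Qed.

Definition inv1p (c x : R) : R := 1 / (1 + c * x).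

Lemma inv1p_0 (c : R) : inv1p c 0 = 1.
Proof. unfold inv1p. rewrite Rmult_0_r, Rplus_0_r. field. Qed.

Lemma inv1p_lt_1 (c x : R) : 0 < c -> 0 <= x -> inv1p c x < 1 <-> 0 < x.
Proof.
  intros Hc Hx. unfold inv1p. rewrite <- Rdiv_lt_1 by nra. nra.
Qed.

Lemma inv1p_inj (c c' x x' : R) : inv1p c x = inv1p c' x' -> c * x = c' * x'.
Proof.
  intros E. unfold inv1p in E.
  apply (f_equal Rinv) in E. rewrite !Rinv_div, !Rdiv_1_r in E. lra.
Qed.

Lemma ln2_pos : 0 < ln 2.
Proof. rewrite <- ln_1. apply ln_increasing; lra. Qed.

Lemma phi_last_derivative (p gamma B : R) (w N : nat) (eta : nat -> R) :
  0 < gamma -> (1 <= w)%nat -> 0 <= eta N -> 0 <= B - sum1 eta N ->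
  derivable_pt_lim (phi_last p gamma B w eta N) 0
    (gamma / ln 2 * alpha p w N
     * (inv1p gamma (eta N) - inv1p (gamma / INR w) (B - sum1 eta N))).
Proof.
  intros Hgamma Hw Hx Hs.
  assert (Hw' : 0 < INR w) by (apply lt_0_INR; lia).
  assert (0 <= gamma * eta N) by nra.
  assert (0 <= gamma * ((B - sum1 eta N) / INR w))
    by (apply Rmult_le_pos; [lra|apply Rdiv_le_0_compat; lra]).
  pose proof ln2_pos.
  apply is_derive_Reals. unfold phi_last, log2, inv1p.
  auto_derive.
  - rewrite !Rplus_0_r. repeat split; lra.
  - rewrite !Rplus_0_r. field. repeat split; nra.
Qed.

Lemma phi_transfer_derivative (p gamma B : R) (w j : nat) (eta : nat -> R) :
  0 < gamma -> (1 <= w)%nat -> (1 <= j)%nat ->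
  0 <= eta j -> 0 <= eta (S j) -> 0 <= B - sum1 eta j ->
  derivable_pt_lim (phi_transfer p gamma B w eta j) 0
    (gamma / ln 2 * alpha p w j
     * (inv1p gamma (eta j) - (1 - p) * inv1p gamma (eta (S j))
        - p * inv1p (gamma / INR w) (B - sum1 eta j))).
Proof.
  intros Hgamma Hw Hj Hx HSx Hs.
  assert (Hw' : 0 < INR w) by (apply lt_0_INR; lia).
  assert (0 <= gamma * eta j) by nra.
  assert (0 <= gamma * eta (S j)) by nra.
  assert (0 <= gamma * ((B - sum1 eta j) / INR w))
    by (apply Rmult_le_pos; [lra|apply Rdiv_le_0_compat; lra]).
  pose proof ln2_pos.
  apply is_derive_Reals. unfold phi_transfer, log2, inv1p.
  auto_derive.
  - rewrite ?Ropp_0, !Rplus_0_r. repeat split; lra.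
  - rewrite alpha_S by exact Hj. rewrite ?Ropp_0, !Rplus_0_r. field. repeat split; nra.
Qed.

Section FirstOrderConditions.
Variables (p gamma B : R) (w N : nat) (xi : nat -> R).
Hypotheses (Hp : 0 < p < 1) (Hgamma : 0 < gamma) (HB : 0 < B) (Hw : (1 <= w)%nat)
  (HN : (1 <= N)%nat) (Hmax : is_maximizerN p gamma B w N xi).

Lemma maximizer_nonneg (j : nat) : (1 <= j <= N)%nat -> 0 <= xi j.
Proof. destruct Hmax as [[Hx _] _]. apply Hx. Qed.

Lemma maximizer_slack_le (k : nat) : (k <= N)%nat -> B - sum1 xi N <= B - sum1 xi k.
Proof.
  intros Hk. enough (sum1 xi k <= sum1 xi N) by lra.
  apply sum1_le; [exact maximizer_nonneg|exact Hk].
Qed.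

Lemma maximizer_slack_nonneg (k : nat) : (k <= N)%nat -> 0 <= B - sum1 xi k.
Proof.
  intros Hk. destruct Hmax as [[_ Hsum] _]. pose proof (maximizer_slack_le k Hk). lra.
Qed.

Lemma maximizer_line_derivative (pert : R -> nat -> R) (phi : R -> R) (a b l : R) :
  a <= 0 <= b ->
  (forall t, a <= t <= b -> feasibleN B N (pert t)) ->
  (forall t, TN_closed p gamma B w N (pert t) - TN_closed p gamma B w N xi = phi t - phi 0) ->
  derivable_pt_lim phi 0 l ->
  (0 < b -> l <= 0) /\ (a < 0 -> 0 <= l).
Proof.
  intros Hab Hfeas Hchange Hl.
  assert (Hline : forall t, a <= t <= b -> phi t <= phi 0).
  { intros t Ht. destruct Hmax as [_ Hopt]. specialize (Hopt _ (Hfeas t Ht)).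
    rewrite !TN_closedE in Hopt by assumption. specialize (Hchange t). lra. }
  split; intros Hd.
  - apply (deriv_nonpos_right_max phi 0 l b Hl Hd).
    intros t Ht. apply Hline. lra.
  - apply (deriv_nonneg_left_max phi 0 l (- a) Hl ltac:(lra)).
    intros t Ht. apply Hline. lra.
Qed.

Lemma kkt_last :
  (0 < B - sum1 xi N -> inv1p gamma (xi N) <= inv1p (gamma / INR w) (B - sum1 xi N)) /\
  (0 < xi N -> inv1p (gamma / INR w) (B - sum1 xi N) <= inv1p gamma (xi N)).
Proof.
  assert (HxN : 0 <= xi N) by (apply maximizer_nonneg; lia).
  assert (HsN := maximizer_slack_nonneg N (le_n N)).
  pose proof (phi_last_derivative p gamma B w N xi Hgamma Hw HxN HsN) as Hd.
  apply (maximizer_line_derivative (bump xi N) _ (- xi N) (B - sum1 xi N)) in Hd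
    as [Hup Hdown].
  - assert (Hc : 0 < gamma / ln 2 * alpha p w N)
      by (pose proof ln2_pos; pose proof (alpha_pos p w N Hp);
          apply Rmult_lt_0_compat; [apply Rdiv_lt_0_compat|]; assumption).
    split; intros H; [specialize (Hup H) | specialize (Hdown ltac:(lra))]; nra.
  - lra.
  - intros t Ht. apply feasibleN_bump; [apply Hmax|lia|lra].
  - intros t. apply TN_closed_bump_last. exact HN.
Qed.

Lemma kkt_transfer (j : nat) : (1 <= j < N)%nat ->
  (0 < xi (S j) -> inv1p gamma (xi j)
     <= (1 - p) * inv1p gamma (xi (S j)) + p * inv1p (gamma / INR w) (B - sum1 xi j)) /\
  (0 < xi j -> (1 - p) * inv1p gamma (xi (S j)) + p * inv1p (gamma / INR w) (B - sum1 xi j)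
     <= inv1p gamma (xi j)).
Proof.
  intros Hj.
  assert (Hxj : 0 <= xi j) by (apply maximizer_nonneg; lia).
  assert (HxSj : 0 <= xi (S j)) by (apply maximizer_nonneg; lia).
  assert (Hsj := maximizer_slack_nonneg j ltac:(lia)).
  pose proof (phi_transfer_derivative p gamma B w j xi Hgamma Hw ltac:(lia) Hxj HxSj Hsj)
    as Hd.
  apply (maximizer_line_derivative (transfer xi j) _ (- xi j) (xi (S j))) in Hd
    as [Hup Hdown].
  - assert (Hc : 0 < gamma / ln 2 * alpha p w j)
      by (pose proof ln2_pos; pose proof (alpha_pos p w j Hp);
          apply Rmult_lt_0_compat; [apply Rdiv_lt_0_compat|]; assumption).
    split; intros H; [specialize (Hup H) | specialize (Hdown ltac:(lra))]; nra.
  - lra.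
  - intros t Ht. apply feasibleN_transfer; [apply Hmax|lia|lra].
  - intros t. apply TN_closed_transfer. exact Hj.
Qed.

Lemma maximizer_tight_coord_zero (k : nat) : (1 <= k <= N)%nat -> sum1 xi k = B -> xi k = 0.
Proof.
  intros Hk Htight.
  destruct (Rle_lt_or_eq _ _ (maximizer_nonneg k Hk)) as [Hpos|]; [exfalso|lra].
  assert (Hv : inv1p (gamma / INR w) (B - sum1 xi k) = 1)
    by (replace (B - sum1 xi k) with 0 by lra; apply inv1p_0).
  assert (Hu : inv1p gamma (xi k) < 1) by (apply inv1p_lt_1; lra).
  destruct (Nat.eq_dec k N) as [->|HkN].
  - destruct kkt_last as [_ Hdown]. specialize (Hdown Hpos). lra.
  - assert (HxSk : xi (S k) = 0).
    { pose proof (maximizer_slack_nonneg (S k) ltac:(lia)).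
      pose proof (maximizer_nonneg (S k) ltac:(lia)). simpl sum1 in *. lra. }
    destruct (kkt_transfer k ltac:(lia)) as [_ Hdown]. specialize (Hdown Hpos).
    rewrite HxSk, inv1p_0, Hv in Hdown. lra.
Qed.

Lemma maximizer_slack_pos : 0 < B - sum1 xi N.
Proof.
  destruct (Rle_lt_or_eq _ _ (maximizer_slack_nonneg N (le_n N))) as [|Htight];
    [assumption|exfalso].
  assert (Hall : forall k, (k <= N)%nat -> sum1 xi k = B).
  { apply Nat.left_induction.
    - intros ? ? ->. reflexivity.
    - lra.
    - intros k Hk HSk. pose proof (maximizer_tight_coord_zero (S k) ltac:(lia) HSk).
      simpl sum1 in HSk. lra. }
  specialize (Hall 0%nat ltac:(lia)). simpl in Hall. lra.
Qed.

Lemma maximizer_pos (j : nat) : (1 <= j <= N)%nat -> 0 < xi j.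
Proof.
  intros Hj.
  assert (Hv : forall k, (k <= N)%nat -> inv1p (gamma / INR w) (B - sum1 xi k) < 1).
  { intros k Hk. pose proof maximizer_slack_pos. pose proof (maximizer_slack_le k Hk).
    assert (0 < INR w) by (apply lt_0_INR; lia).
    apply inv1p_lt_1; try apply Rdiv_lt_0_compat; lra. }
  revert Hj. enough (Hall : forall k, (k <= N)%nat -> (1 <= k)%nat -> 0 < xi k)
    by (intros Hj; apply Hall; lia).
  apply (Nat.left_induction (fun k => (1 <= k)%nat -> 0 < xi k)).
  - intros ? ? ->. reflexivity.
  - intros _. destruct kkt_last as [Hup _]. specialize (Hup maximizer_slack_pos).
    pose proof (Hv N (le_n N)).
    apply (inv1p_lt_1 gamma); [assumption|apply maximizer_nonneg; lia|lra].
  - intros k Hk IH Hk1. specialize (IH ltac:(lia)).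
    destruct (kkt_transfer k ltac:(lia)) as [Hup _]. specialize (Hup IH).
    pose proof (Hv k ltac:(lia)).
    assert (inv1p gamma (xi (S k)) < 1) by (apply inv1p_lt_1; lra).
    apply (inv1p_lt_1 gamma); [assumption|apply maximizer_nonneg; lia|nra].
Qed.

End FirstOrderConditions.

Theorem lemma6 (p gamma B : R) (w N : nat) (xi : nat -> R) :
  0 < p < 1 -> 0 < gamma -> 0 < B -> (1 <= w)%nat -> (1 <= N)%nat ->
  is_maximizerN p gamma B w N xi ->
  xi N = (B - sum1 xi N) / INR w /\
  (forall j : nat, (1 <= j <= N - 1)%nat ->
     (1 - p) / (1 + gamma * xi (S j))
     = 1 / (1 + gamma * xi j)
       - p / (1 + gamma / INR w * (B - sum1 xi j))).
Proof.
  intros Hp Hgamma HB Hw HN Hmax.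
  pose proof (maximizer_slack_pos p gamma B w N xi Hp Hgamma HB Hw HN Hmax) as Hslack.
  pose proof (maximizer_pos p gamma B w N xi Hp Hgamma HB Hw HN Hmax) as Hpos.
  split.
  - destruct (kkt_last p gamma B w N xi Hp Hgamma Hw HN Hmax) as [Hup Hdown].
    assert (Hw' : INR w <> 0) by (apply not_0_INR; lia).
    apply (Rmult_eq_reg_l gamma); [|lra].
    rewrite (inv1p_inj gamma (gamma / INR w) (xi N) (B - sum1 xi N)).
    + field. exact Hw'.
    + apply Rle_antisym; [apply Hup, Hslack|apply Hdown, Hpos; lia].
  - intros j Hj.
    destruct (kkt_transfer p gamma B w N xi Hp Hgamma Hw HN Hmax j ltac:(lia))
      as [Hup Hdown].
    specialize (Hup (Hpos (S j) ltac:(lia))). specialize (Hdown (Hpos j ltac:(lia))).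
    unfold inv1p, Rdiv in *. lra.
Qed.
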